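(* Let $A$ be a total ring of fractions, $f:A\to B$ a ring homomorphism, and $\mathfrak b$ an ideal of $B$ contained in the Jacobson radical of $B$. Let $A\bowtie^f\mathfrak b:=\{(a,f(a)+b): a\in A,\ b\in\mathfrak b\}\subseteq A\times B$. Assume at least one of the following: (a) $\mathfrak b\subseteq f(A)$; (b) $\mathfrak b$ is a torsion $A$-module (with the $A$-module structure induced by $f$). Then $A\bowtie^f\mathfrak b$ is a total ring of fractions; in particular it is a Prüfer ring.
   Context: All rings are commutative with identity. A ring is a total ring of fractions if every element is either a unit or a zerodivisor. $\mathfrak b$ is an $A$-module via $a\cdot x:=f(a)x$; it is torsion if every $x\in\mathfrak b$ is annihilated by some non-zerodivisor of $A$. A ring is a Prüfer ring if every finitely generated ideal containing a non-zerodivisor is invertible. *)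

From HB Require Import structures.
From mathcomp Require Import all_boot all_order all_algebra.
Set Implicit Arguments. Unset Strict Implicit. Unset Printing Implicit Defensive.
Import GRing.Theory.
Local Open Scope ring_scope.

(* All notions below are stated for a subring S (given as a predicate) of an
   ambient commutative ring R, with the ring operations of S being those of R.
   For a ring R itself take S := fun _ => True. *)
Section RelNotions.
Variables (R : comPzRingType) (S : R -> Prop).

Definition unit_in (x : R) : Prop := S x /\ exists y, S y /\ x * y = 1.
Definition zerodiv_in (x : R) : Prop :=
  S x /\ exists y, S y /\ y <> 0 /\ x * y = 0.
Definition regular_in (x : R) : Prop :=
  S x /\ forall y, S y -> x * y = 0 -> y = 0.

Definition total_frac_in : Prop :=
  forall x, S x -> unit_in x \/ zerodiv_in x.

Definition ideal_in (I : R -> Prop) : Prop :=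
  [/\ forall x, I x -> S x, I 0,
      forall x y, I x -> I y -> I (x + y) &
      forall r x, S r -> I x -> I (r * x)].

Definition fg_ideal_in (I : R -> Prop) : Prop :=
  ideal_in I /\ exists (n : nat) (g : 'I_n -> R), (forall i, S (g i)) /\
    forall x, I x <-> exists c : 'I_n -> R,
      (forall i, S (c i)) /\ x = \sum_(i < n) c i * g i.

Definition prod_ideal (I J : R -> Prop) : R -> Prop := fun x =>
  exists (n : nat) (a b : 'I_n -> R),
    (forall i, I (a i) /\ J (b i)) /\ x = \sum_(i < n) a i * b i.

(* I is invertible: I J = S for some S-submodule J of the total ring of
   fractions; equivalently (clearing a common denominator of the finitely many
   generators needed) I J = d S for an ideal J of S and a regular d of S. *)
Definition invertible_in (I : R -> Prop) : Prop :=
  exists (J : R -> Prop) (d : R), ideal_in J /\ regular_in d /\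
    forall x, prod_ideal I J x <-> exists s, S s /\ x = d * s.

Definition prufer_in : Prop :=
  forall I, fg_ideal_in I -> (exists x, I x /\ regular_in x) -> invertible_in I.

Definition maximal_ideal_in (M : R -> Prop) : Prop :=
  [/\ ideal_in M, ~ M 1 &
      forall J, ideal_in J -> (forall y, M y -> J y) ->
        J 1 \/ (forall y, J y -> M y)].

Definition jacobson_in (x : R) : Prop :=
  S x /\ forall M, maximal_ideal_in M -> M x.
End RelNotions.

Definition setT_ (R : Type) : R -> Prop := fun _ => True.
Arguments setT_ R : clear implicits.

Definition amalgamation (A B : comPzRingType) (f : {rmorphism A -> B})
  (b : B -> Prop) : (A * B)%type -> Prop :=
  fun p => exists (a : A) (y : B), b y /\ p = (a, f a + y).

From HB Require Import structures.
From mathcomp Require Import all_boot all_order all_algebra.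
From mathcomp Require Import boolp classical_sets ring.
Set Implicit Arguments.
Unset Strict Implicit.
Unset Printing Implicit Defensive.
Import GRing.Theory.
Local Open Scope ring_scope.

(* Units of A lift to units of A ⋈^f b because b lies in the Jacobson radical:
   if a a' = 1 then (f a + y) f a' = 1 + f a' y is a unit of B.  Zerodivisors
   of A lift to zerodivisors: a witness c with a c = 0 is lifted to (c, f c),
   corrected by a factor killing the b-component, which exists precisely under
   hypothesis (a) or (b).  A total ring of fractions is trivially Prüfer, since
   an ideal containing a regular element contains a unit. *)

Section MaximalIdeals.
Variable R : comPzRingType.

Lemma exists_maximal_ideal_sup (I : R -> Prop) :
  ideal_in (setT_ R) I -> ~ I 1 ->
  exists M, maximal_ideal_in (setT_ R) M /\ forall x, I x -> M x.
Proof.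
move=> I_ideal nI1; have [_ I0 _ _] := I_ideal.
pose Q (X : set R) :=
  [/\ ideal_in (setT_ R) X, forall x, I x -> X x & ~ X 1].
pose P : set (set R) := fun X => X = set0 \/ Q X.
have [M [PM Mmax]] : exists M, P M /\ forall C, (M `<` C)%classic -> ~ P C.
  apply: Zorn_bigcup => F FP Ftot.
  have QF X x : F X -> X x -> Q X.
    by move=> FX Xx; case: (FP X FX) => // E; rewrite E in Xx.
  have [[X0 [FX0 QX0]]|noQ] := pselect (exists X, F X /\ Q X); last first.
    left; apply/seteqP; split => // x [X FX Xx].
    by apply: noQ; exists X; split => //; apply: QF Xx.
  have [[_ X00 _ _] IX0 _] := QX0.
  right; split; [split|by move=> x Ix; exists X0 => //; apply: IX0|].
  - by [].
  - by exists X0.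
  - move=> x y [X FX Xx] [Y FY Yy].
    have [[_ _ XD _] _ _] := QF _ _ FX Xx; have [[_ _ YD _] _ _] := QF _ _ FY Yy.
    case: (Ftot X Y FX FY) => [XY|YX].
      by exists Y => //; apply: YD => //; apply: XY.
    by exists X => //; apply: XD => //; apply: YX.
  - move=> r x _ [X FX Xx]; have [[_ _ _ XM] _ _] := QF _ _ FX Xx.
    by exists X => //; apply: XM.
  - by move=> [X FX X1]; have [_ _] := QF _ _ FX X1.
have QI : Q I by split.
have [M_ideal IM nM1] : Q M.
  case: PM => // M0; exfalso; apply: (Mmax I); last by right.
  by rewrite M0; split => // /(_ 0 I0).
exists M; split => //; split => // J IJ MJ.
have [J1|nJ1] := pselect (J 1); [by left | right].
move=> y Jy; apply: contrapT => nMy; apply: (Mmax J); last first.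
  by right; split => // x /IM /MJ.
by split => [x /MJ //|/(_ y Jy)].
Qed.

Lemma jacobson_unit (j : R) :
  jacobson_in (setT_ R) j -> exists v, (1 + j) * v = 1.
Proof.
move=> [_ jM]; apply: contrapT => nunit.
pose uR (x : R) := exists r, x = r * (1 + j).
have uR_ideal : ideal_in (setT_ R) uR.
  split => //.
  - by exists 0; rewrite mul0r.
  - by move=> x y [r ->] [s ->]; exists (r + s); rewrite mulrDl.
  - by move=> r x _ [s ->]; exists (r * s); rewrite mulrA.
have nuR1 : ~ uR 1 by move=> [r E]; apply: nunit; exists r; rewrite mulrC -E.
have [M [maxM uRM]] := exists_maximal_ideal_sup uR_ideal nuR1.
have [[_ _ MD MM] M1 _] := maxM.
apply: M1; rewrite -(addrK j 1) addrC.
apply: MD; last by apply: uRM; exists 1; rewrite mul1r.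
by rewrite -mulN1r; apply: MM; [|apply: jM].
Qed.

End MaximalIdeals.

Section TotalFractions.
Variables (R : comPzRingType) (S : R -> Prop).

Definition subring_in : Prop :=
  [/\ S 0, S 1, forall x y, S x -> S y -> S (x + y)
    & forall x y, S x -> S y -> S (x * y)].

Lemma total_frac_regular_unit x :
  total_frac_in S -> regular_in S x -> unit_in S x.
Proof.
move=> totS [Sx xreg]; case: (totS x Sx) => // [[_ [y [Sy [y0 xy]]]]].
by exfalso; apply: y0; apply: xreg.
Qed.

Lemma total_frac_prufer : subring_in -> total_frac_in S -> prufer_in S.
Proof.
move=> [S0 S1 SD SM] totS I [[IS _ _ _] _] [x [Ix xreg]].
have [_ [y [Sy xy]]] := total_frac_regular_unit totS xreg.
exists S, 1; split; first by split.
split; first by split => // z Sz; rewrite mul1r.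
move=> z; split.
- move=> [n [a [c [Hac ->]]]]; exists (\sum_(i < n) a i * c i).
  split; last by rewrite mul1r.
  apply: (big_ind S) => // i _.
  by have [/IS Sa Sc] := Hac i; apply: SM.
- move=> [s [Ss ->]]; exists 1%N, (fun _ => x), (fun _ => y * s).
  split; first by move=> _; split => //; apply: SM.
  by rewrite big_ord1 mulrA xy !mul1r.
Qed.

End TotalFractions.

Section PairRing.
Variables A B : comPzRingType.

Lemma pair_neq0l (a : A) (x : B) : a <> 0 -> ((a, x) : A * B) <> 0.
Proof. by move=> a0 [/a0]. Qed.

Lemma pair_mul_eq0 (a c : A) (x y : B) :
  a * c = 0 -> x * y = 0 -> ((a, x) : A * B) * (c, y) = 0.
Proof. by move=> ac0 xy0; change ((a * c, x * y) = (0, 0)); rewrite ac0 xy0. Qed.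

End PairRing.

Section Amalgamation.
Variables (A B : comPzRingType) (f : {rmorphism A -> B}) (b : B -> Prop).
Hypothesis b_ideal : ideal_in (setT_ B) b.

Lemma amalgamation_subring : subring_in (amalgamation f b).
Proof.
have [_ b0 bD bM] := b_ideal; split.
- by exists 0, 0; rewrite rmorph0 addr0.
- by exists 1, 0; rewrite rmorph1 addr0.
- move=> _ _ [a [y [by_ ->]]] [a' [y' [by' ->]]].
  exists (a + a'), (y + y'); split; first exact: bD.
  by congr (_, _); rewrite /= rmorphD addrACA.
- move=> _ _ [a [y [by_ ->]]] [a' [y' [by' ->]]].
  exists (a * a'), (f a * y' + y * (f a' + y')); split.
    by apply: bD; [apply: bM | rewrite mulrC; apply: bM].
  by congr (_, _); rewrite /= rmorphM; ring.
Qed.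

Lemma amalgamation_unit a y :
  (forall x, b x -> jacobson_in (setT_ B) x) ->
  unit_in (setT_ A) a -> b y -> unit_in (amalgamation f b) (a, f a + y).
Proof.
have [_ _ _ bM] := b_ideal.
move=> b_jac [_ [a' [_ aa']]] by_.
have faa' : f a * f a' = 1 by rewrite -rmorphM aa' rmorph1.
have [v uv] := jacobson_unit (b_jac _ (bM (f a') y I by_)).
have inv_eq : f a' * v = f a' + - (f a' * f a' * v) * y.
  by rewrite -{2}[f a']mulr1 -uv; ring.
split; first by exists a, y.
exists (a', f a' * v); split.
  by rewrite inv_eq; exists a', (- (f a' * f a' * v) * y); split => //; apply: bM.
congr (_, _); first exact: aa'.
by rewrite /= mulrA mulrDl faa' (mulrC y) uv.
Qed.

Lemma amalgamation_zerodiv_image a a0 :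
  zerodiv_in (setT_ A) a -> b (f a0) ->
  zerodiv_in (amalgamation f b) (a, f a + f a0).
Proof.
have [_ b0 _ bM] := b_ideal.
move=> [_ [c [_ [c0 ac]]]] ba0; split; first by exists a, (f a0).
have [ca0|nca0] := pselect (c * a0 = 0).
- exists (c, f c); split; first by exists c, 0; rewrite addr0.
  split; first exact: pair_neq0l.
  apply: pair_mul_eq0 => //.
  by rewrite -rmorphD -rmorphM mulrDl ac (mulrC a0) ca0 add0r rmorph0.
- exists (c * a0, 0); split.
    exists (c * a0), (- f c * f a0); split; first by apply: bM.
    by rewrite rmorphM mulNr addrN.
  split; first exact: pair_neq0l.
  by apply: pair_mul_eq0; rewrite ?mulr0 // mulrA ac mul0r.
Qed.

Lemma amalgamation_zerodiv_torsion a s y :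
  zerodiv_in (setT_ A) a -> regular_in (setT_ A) s -> f s * y = 0 -> b y ->
  zerodiv_in (amalgamation f b) (a, f a + y).
Proof.
have [_ b0 _ _] := b_ideal.
move=> [_ [c [_ [c0 ac]]]] [_ sreg] sy by_; split; first by exists a, y.
exists (c * s, f (c * s)); split; first by exists (c * s), 0; rewrite addr0.
split.
  by apply: pair_neq0l => cs0; apply: c0; apply: sreg => //; rewrite mulrC.
apply: pair_mul_eq0; first by rewrite mulrA ac mul0r.
have -> : (f a + y) * f (c * s) = f (a * c) * f s + f c * (f s * y)
  by rewrite !rmorphM; ring.
by rewrite ac sy rmorph0 mul0r mulr0 addr0.
Qed.

End Amalgamation.

Theorem proposition4p6 (A B : comPzRingType) (f : {rmorphism A -> B})
  (b : B -> Prop) :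
  total_frac_in (setT_ A) ->
  ideal_in (setT_ B) b ->
  (forall x, b x -> jacobson_in (setT_ B) x) ->
  ((forall x, b x -> exists a : A, x = f a) \/
   (forall x, b x -> exists a : A, regular_in (setT_ A) a /\ f a * x = 0)) ->
  total_frac_in (amalgamation f b) /\ prufer_in (amalgamation f b).
Proof.
move=> totA b_ideal b_jac b_image_or_torsion.
have totS : total_frac_in (amalgamation f b).
  move=> _ [a [y [by_ ->]]].
  case: (totA a I) => [Ua|Za]; first by left; apply: amalgamation_unit.
  right; case: b_image_or_torsion => [b_image|b_torsion].
  - by have [a0 y_a0] := b_image y by_; subst y; apply: amalgamation_zerodiv_image.
  - have [s [sreg sy]] := b_torsion y by_.
    exact: amalgamation_zerodiv_torsion sreg sy by_.
split => //; apply: total_frac_prufer => //; exact: amalgamation_subring.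
Qed.
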